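(* Let $V, E, (v_i)_{i\in\mathbb{Z}}, \tau$ be as in the context, and let $\mathbb{P}$ be a Borel probability measure on $\Omega=[0,\infty)^E$ (product Borel $\sigma$-algebra) that admits geodesics, i.e. for all $x,y\in V$, $\mathbb{P}(\text{there exists a geodesic from }x\text{ to }y)=1$. Then with $\mathbb{P}$-probability one the geodesic graphs $\mathbb{G}_n$ converge to a directed graph $\mathbb{G}$ (that is, for each directed edge $e\in\vec E$, $\eta_n(e)$ converges as $n\to\infty$, and $\mathbb{G}$ is the directed graph with edge set $\{e:\lim_n\eta_n(e)=1\}$), and each directed path in $\mathbb{G}$ is a geodesic.
   Context: $V\subseteq\mathbb{Z}^2$ is infinite and connected in the nearest-neighbour lattice with $\mathbb{Z}^2\setminus V$ infinite and connected; $E$ is the set of nearest-neighbour edges with both endpoints in $V$. There is a doubly infinite, vertex-self-avoiding dual path $\Gamma=(e_i^* )_{i\in\mathbb{Z}}$ (dual lattice $\mathbb{Z}^2+(1/2,1/2)$, $e^*$ the dual edge bisecting $e$) such that $(V,E)$ is one of the two components of $(\mathbb{Z}^2,\mathcal{E}^2)$ with the edges $e_i$ dual to the $e_i^*$ removed; fix it and let $v_i$ be the endpoint of $e_i$ in $V$. For $\omega\in\Omega$, $\tau(\gamma)=\sum_{e\in\gamma}\omega_e$ for a finite path $\gamma$ and $\tau(x,y)$ is the infimum of $\tau(\gamma)$ over paths $\gamma$ in $(V,E)$ from $x$ to $y$; a geodesic from $x$ to $y$ is a path $\gamma$ from $x$ to $y$ with $\tau(\gamma)=\tau(x,y)$.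 Let $\vec E=\{(x,y):\{x,y\}\in E\}$. For $n\in\mathbb{Z}$ define $\eta_n\in\{0,1\}^{\vec E}$ by $\eta_n((x,y))=1$ iff $\{x,y\}$ lies in a geodesic from some vertex of $V$ to $v_n$ and $\tau(x,v_n)\ge\tau(y,v_n)$; $\mathbb{G}_n$ is the directed graph on $V$ with edge set $\{e\in\vec E:\eta_n(e)=1\}$. *)

From HB Require Import structures.
From mathcomp Require Import all_boot all_order all_algebra.
From mathcomp Require Import all_classical all_reals all_analysis.
Set Implicit Arguments. Unset Strict Implicit. Unset Printing Implicit Defensive.
Import Order.TTheory GRing.Theory Num.Theory.
Local Open Scope classical_set_scope.
Local Open Scope ring_scope.

Definition pt := (int * int)%type.

Definition nn (x y : pt) : Prop := `|x.1 - y.1| + `|x.2 - y.2| = 1.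

(** Undirected nearest-neighbour edges of Z^2, encoded canonically:
    (x, false) = {x, x + (1,0)},  (x, true) = {x, x + (0,1)}. *)
Definition Edge := (pt * bool)%type.
Definition eA (e : Edge) : pt := e.1.
Definition eB (e : Edge) : pt :=
  if e.2 then (e.1.1, e.1.2 + 1) else (e.1.1 + 1, e.1.2).

Definition edge_of (x y : pt) : Edge :=
  if x.1 == y.1 then ((x.1, Num.min x.2 y.2), true)
  else ((Num.min x.1 y.1, x.2), false).

(** Dual lattice Z^2 + (1/2,1/2): the code d = (a,b) stands for the dual
    vertex (a+1/2, b+1/2); dual vertices are adjacent iff their codes are nn.
    [dual_edge d d'] is the primal edge e bisected by the dual edge e* = {d,d'}. *)
Definition dual_edge (d d' : pt) : Edge :=
  if d.1 == d'.1 then ((d.1, Num.min d.2 d'.2 + 1), false)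
  else ((Num.min d.1 d'.1 + 1, d.2), true).

(** finite chains x = x_0, x_1, ..., x_k (s = [:: x_1; ...; x_k]) along r *)
Fixpoint chain (r : pt -> pt -> Prop) (x : pt) (s : seq pt) : Prop :=
  match s with
  | [::] => True
  | y :: s' => r x y /\ chain r y s'
  end.

Definition lconnected (S : set pt) : Prop :=
  forall x y, S x -> S y ->
    exists s, chain (fun a b => nn a b /\ S b) x s /\ last x s = y.

Definition lcomponent (r : pt -> pt -> Prop) (x : pt) : set pt :=
  [set y | exists s, chain r x s /\ last x s = y].

Definition inEdges (V : set pt) (e : Edge) : Prop := V (eA e) /\ V (eB e).
Definition EType (V : set pt) := {e : Edge | inEdges V e}.

(** Omega = R^E with the product (cylinder-generated) Borel sigma-algebra. *)
Definition OmegaT (V : set pt) (R : realType) := EType V -> R.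
HB.instance Definition _ V R := Choice.on (OmegaT V R).
HB.instance Definition _ V (R : realType) :=
  isPointed.Build (OmegaT V R) (fun _ => 0).
Definition cylinders (V : set pt) (R : realType) : set (set (OmegaT V R)) :=
  [set A | exists (e : EType V) (B : set R),
     measurable B /\ A = (fun w : OmegaT V R => w e) @^-1` B].
Notation Omega V R := (g_sigma_algebraType (@cylinders V R)).

Section FPP.
Variables (V : set pt) (R : realType).

(** weight of an edge of Z^2 (0 outside E; only used on edges of E) *)
Definition wt (w : EType V -> R) (e : Edge) : R :=
  match pselect (inEdges V e) with
  | left h => w (exist _ e h)
  | right _ => 0
  end.

Definition Vpath (x : pt) (s : seq pt) : Prop :=
  V x /\ chain (fun a b => nn a b /\ V b) x s.

(** passage time of the path x :: s (edges counted with multiplicity) *)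
Fixpoint tauP (w : EType V -> R) (x : pt) (s : seq pt) : R :=
  match s with
  | [::] => 0
  | y :: s' => wt w (edge_of x y) + tauP w y s'
  end.

Definition fdist (w : EType V -> R) (x y : pt) : R :=
  inf [set tauP w x s | s in [set s | Vpath x s /\ last x s = y]].

Definition geodesic (w : EType V -> R) (x : pt) (s : seq pt) (y : pt) : Prop :=
  Vpath x s /\ last x s = y /\ tauP w x s = fdist w x y.

Fixpoint hasedge (x : pt) (s : seq pt) (a b : pt) : Prop :=
  match s with
  | [::] => False
  | y :: s' => ((x = a /\ y = b) \/ (x = b /\ y = a)) \/ hasedge y s' a b
  end.

Definition dirE (x y : pt) : Prop := nn x y /\ V x /\ V y.

Definition eta_n (w : EType V -> R) (v : int -> pt) (n : int) (x y : pt) : Prop :=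
  dirE x y /\
  (exists z s, geodesic w z s (v n) /\ hasedge z s x y) /\
  fdist w y (v n) <= fdist w x (v n).

Definition Glim (w : EType V -> R) (v : int -> pt) (x y : pt) : Prop :=
  exists N : int, forall n : int, N <= n -> eta_n w v n x y.

End FPP.

From HB Require Import structures.
From mathcomp Require Import all_boot all_order all_algebra.
From mathcomp Require Import all_classical all_reals all_analysis.
From mathcomp Require Import zify lra.
Import Order.TTheory GRing.Theory Num.Theory.
Local Open Scope classical_set_scope.
Local Open Scope ring_scope.
Set Implicit Arguments. Unset Strict Implicit. Unset Printing Implicit Defensive.

(* Call the step from x to y oriented toward t if T(x, t) = w(xy) + T(y, t);
   eta_n(x, y) = 1 exactly when it is oriented toward v_n.  Planarity gives an
   interlacing property: for n1 < m1 < n2 < m2, geodesics from y to v_n1 and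
   v_n2 and from x to v_m1 and v_m2 must share a vertex, since the first two,
   closed up through Z^2 \ V across e_n1 and e_n2, form a loop whose mod-2
   winding number around the dual vertices of Gamma flips exactly at e_n1 and
   e_n2.  At a shared vertex the triangle inequality transfers the
   orientation, so orientation toward v_n1 and v_n2 forces orientation toward
   v_m1 or v_m2: eta_n(x, y) cannot alternate forever, hence converges.
   Along a directed path of the limit graph the passage time telescopes to
   T(x, v_n) - T(end, v_n) for large n, so the path is a geodesic.  Admitting
   geodesics is a countable family of almost-sure events. *)

Lemma nn_cases (a b : pt) : nn a b ->
  b = (a.1 + 1, a.2) \/ b = (a.1 - 1, a.2) \/ b = (a.1, a.2 + 1) \/ b = (a.1, a.2 - 1).
Proof.
case: a b => [p q] [p' q']; rewrite /nn /= => h.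
have : (p' = p + 1 /\ q' = q) \/ (p' = p - 1 /\ q' = q) \/
       (p' = p /\ q' = q + 1) \/ (p' = p /\ q' = q - 1) by lia.
by case=> [[-> ->]|[[-> ->]|[[-> ->]|[-> ->]]]]; auto.
Qed.

Lemma nn_sym (a b : pt) : nn a b -> nn b a.
Proof. case: a b => [p q] [p' q']; rewrite /nn /=; lia. Qed.

Lemma nn_ends (e : Edge) : nn (eA e) (eB e).
Proof. case: e => [[p q] []]; rewrite /eA /eB /nn /=; lia. Qed.

Ltac case_lia := rewrite ?xpair_eqE /=; repeat (match goal with
  | |- context [@eq_op _ ?x ?y] => case: (boolP (@eq_op _ x y)) => ?
  | |- context [(?x < ?y)%R] => case: (boolP (x < y)%R) => ?
  end; rewrite /=); (try done); lia.

Lemma edge_of_right (a : pt) : edge_of a (a.1 + 1, a.2) = (a, false).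
Proof.
case: a => p q; rewrite /edge_of /=.
have -> : (p == p + 1) = false by lia.
rewrite minElt.
by have -> : (p < p + 1) = true by lia.
Qed.

Lemma edge_of_left (a : pt) : edge_of a (a.1 - 1, a.2) = ((a.1 - 1, a.2), false).
Proof.
case: a => p q; rewrite /edge_of /=.
have -> : (p == p - 1) = false by lia.
rewrite minElt.
by have -> : (p < p - 1) = false by lia.
Qed.

Lemma edge_of_up (a : pt) : edge_of a (a.1, a.2 + 1) = (a, true).
Proof.
case: a => p q; rewrite /edge_of /= eqxx minElt.
by have -> : (q < q + 1) = true by lia.
Qed.

Lemma edge_of_down (a : pt) : edge_of a (a.1, a.2 - 1) = ((a.1, a.2 - 1), true).
Proof.
case: a => p q; rewrite /edge_of /= eqxx minElt.
by have -> : (q < q - 1) = false by lia.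
Qed.

Lemma dual_edge_right (d : pt) : dual_edge d (d.1 + 1, d.2) = ((d.1 + 1, d.2), true).
Proof.
case: d => p q; rewrite /dual_edge /=.
have -> : (p == p + 1) = false by lia.
rewrite minElt.
by have -> : (p < p + 1) = true by lia.
Qed.

Lemma dual_edge_left (d : pt) : dual_edge d (d.1 - 1, d.2) = (d, true).
Proof.
case: d => p q; rewrite /dual_edge /=.
have -> : (p == p - 1) = false by lia.
rewrite minElt.
have -> : (p < p - 1) = false by lia.
by rewrite subrK.
Qed.

Lemma dual_edge_up (d : pt) : dual_edge d (d.1, d.2 + 1) = ((d.1, d.2 + 1), false).
Proof.
case: d => p q; rewrite /dual_edge /= eqxx minElt.
by have -> : (q < q + 1) = true by lia.
Qed.

Lemma dual_edge_down (d : pt) : dual_edge d (d.1, d.2 - 1) = (d, false).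
Proof.
case: d => p q; rewrite /dual_edge /= eqxx minElt.
have -> : (q < q - 1) = false by lia.
by rewrite subrK.
Qed.

Lemma edge_of_ends (a b : pt) : nn a b ->
  (eA (edge_of a b) = a /\ eB (edge_of a b) = b) \/
  (eA (edge_of a b) = b /\ eB (edge_of a b) = a).
Proof.
case/nn_cases => [->|[->|[->|->]]].
- by rewrite edge_of_right /eA /eB /=; left; case: a.
- rewrite edge_of_left /eA /eB /=; right; case: a => p q /=; split=> //; congr (_,_); lia.
- by rewrite edge_of_up /eA /eB /=; left; case: a.
- rewrite edge_of_down /eA /eB /=; right; case: a => p q /=; split=> //; congr (_,_); lia.
Qed.

Lemma edge_of_eAB (e : Edge) : edge_of (eA e) (eB e) = e.
Proof.
by case: e => [[p q] []]; rewrite /eA /eB /= ?(edge_of_up (p, q)) ?(edge_of_right (p, q)).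
Qed.

Lemma edge_of_eBA (e : Edge) : edge_of (eB e) (eA e) = e.
Proof.
case: e => [[p q] []]; rewrite /eA /eB /=.
- by have := edge_of_down (p, q + 1); rewrite /= addrK.
- by have := edge_of_left (p + 1, q); rewrite /= addrK.
Qed.

Lemma edge_ofC (a b : pt) : nn a b -> edge_of b a = edge_of a b.
Proof.
case/edge_of_ends => -[ha hb].
- by rewrite -[RHS]edge_of_eBA ha hb.
- by rewrite -[RHS]edge_of_eAB ha hb.
Qed.

(** * Parity of crossings with a vertical ray *)

Fixpoint steps (x : pt) (s : seq pt) : seq (pt * pt) :=
  if s is y :: s' then (x, y) :: steps y s' else [::].

Lemma mem_steps x s st : st \in steps x s -> st.1 \in x :: s /\ st.2 \in x :: s.
Proof.
elim: s x => //= y s IH x; rewrite inE => /orP [/eqP -> | /IH [h1 h2]] /=.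
- by rewrite !inE !eqxx orbT.
- by split; rewrite in_cons ?h1 ?h2 orbT.
Qed.

Lemma odd_count_steps (f : pt -> bool) x s :
  odd (count (fun st => f st.1 != f st.2) (steps x s)) = (f x != f (last x s)).
Proof.
elim: s x => /= [|y s IH] x; first by rewrite eqxx.
by rewrite oddD oddb IH; case: (f x); case: (f y); case: (f (last y s)).
Qed.

Lemma chain_nn_mem (P : pt -> Prop) x s : chain (fun a b => nn a b /\ P b) x s ->
  forall p, p \in s -> P p.
Proof.
elim: s x => //= y s IH x [[_ hy] hc] p; rewrite in_cons => /orP [/eqP -> //|].
exact: IH hc p.
Qed.

Lemma chain_nn_steps (P : pt -> Prop) x s : chain (fun a b => nn a b /\ P b) x s ->
  forall st, st \in steps x s -> nn st.1 st.2.
Proof.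
elim: s x => //= y s IH x [[hxy _] hc] st; rewrite inE => /orP [/eqP -> //|].
exact: IH.
Qed.

Lemma odd_count_addb (T : Type) (p q : pred T) (L : seq T) :
  odd (count p L) (+) odd (count q L) = odd (count (fun x => p x (+) q x) L).
Proof.
elim: L => //= x L IH; rewrite !oddD !oddb -IH.
by case: (p x); case: (q x); case: (odd (count p L)); case: (odd (count q L)).
Qed.

Definition edge_parity (L : seq (pt * pt)) (e : Edge) : bool :=
  odd (count (fun st => edge_of st.1 st.2 == e) L).

(* The step list L of a closed walk is read as a mod-2 1-cycle, and
   [ray_parity L d] as its winding number mod 2 around the dual vertex coded by
   [d], i.e. the point (d.1 + 1/2, d.2 + 1/2): it counts the crossings of L
   with the upward vertical ray from that point, which are exactly the
   horizontal edges ((d.1, q), false) with q > d.2. *)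
Definition ray_crosses (d : pt) (e : Edge) : bool :=
  ~~ e.2 && (e.1.1 == d.1) && (d.2 < e.1.2).

Definition ray_parity (L : seq (pt * pt)) (d : pt) : bool :=
  odd (count (fun st => ray_crosses d (edge_of st.1 st.2)) L).

Definition nn_steps (L : seq (pt * pt)) := forall st, st \in L -> nn st.1 st.2.

Definition boundary_free (L : seq (pt * pt)) :=
  forall f : pt -> bool, ~~ odd (count (fun st => f st.1 != f st.2) L).

Definition avoids (L : seq (pt * pt)) (r : pt) :=
  forall st, st \in L -> st.1 != r /\ st.2 != r.

(* [d] codes one of the four dual vertices around [r]. *)
Definition corner (r d : pt) : bool :=
  ((d.1 == r.1 - 1) || (d.1 == r.1)) && ((d.2 == r.2 - 1) || (d.2 == r.2)).

Lemma ray_crosses_up i j e :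
  ray_crosses (i, j) e (+) ray_crosses (i, j + 1) e = (e == ((i, j + 1), false)).
Proof. by case: e => [[p q] []]; rewrite /ray_crosses /=; case_lia. Qed.

Lemma ray_parity_up L i j :
  ray_parity L (i, j) (+) ray_parity L (i, j + 1) = edge_parity L ((i, j + 1), false).
Proof.
rewrite /ray_parity /edge_parity odd_count_addb /=.
by congr odd; apply: eq_count => st; exact: ray_crosses_up.
Qed.

Lemma ray_crosses_right i j a b : nn a b ->
  ray_crosses (i, j) (edge_of a b) (+) ray_crosses (i + 1, j) (edge_of a b)
    (+) (edge_of a b == ((i + 1, j), true))
  = (((a.1 == i + 1) && (j < a.2)) != ((b.1 == i + 1) && (j < b.2))).
Proof.
case/nn_cases => [->|[->|[->|->]]]; case: a => p q /=.
- by rewrite (edge_of_right (p, q)) /ray_crosses /=; case_lia.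
- by rewrite (edge_of_left (p, q)) /ray_crosses /=; case_lia.
- by rewrite (edge_of_up (p, q)) /ray_crosses /=; case_lia.
- by rewrite (edge_of_down (p, q)) /ray_crosses /=; case_lia.
Qed.

Lemma edge_parity_avoids L r e : nn_steps L -> avoids L r ->
  eA e = r \/ eB e = r -> edge_parity L e = false.
Proof.
move=> hnn hav her; rewrite /edge_parity (@eq_in_count _ _ pred0) ?count_pred0 //.
move=> st hst /=; apply/negP => /eqP he.
have [h1 h2] := hav st hst.
have := edge_of_ends (hnn st hst); rewrite he.
by case: her => -> [[? ?]|[? ?]]; subst; rewrite ?eqxx in h1 h2.
Qed.

Section RayParity.
Variable L : seq (pt * pt).
Hypotheses (hLnn : nn_steps L) (hLbf : boundary_free L).

Lemma ray_parity_right i j :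
  ray_parity L (i, j) (+) ray_parity L (i + 1, j) = edge_parity L ((i + 1, j), true).
Proof.
(* Test boundary-freeness on the vertices (i + 1, q) with q > j. *)
have := hLbf (fun p => (p.1 == i + 1) && (j < p.2)).
rewrite -(@eq_in_count _ (fun st => ray_crosses (i, j) (edge_of st.1 st.2)
   (+) ray_crosses (i + 1, j) (edge_of st.1 st.2)
   (+) (edge_of st.1 st.2 == ((i + 1, j), true)))); last first.
  by move=> st /hLnn /ray_crosses_right.
rewrite -!odd_count_addb /ray_parity /edge_parity /=.
by case: (odd (count _ L)); case: (odd (count _ L)); case: (odd (count _ L)).
Qed.

Lemma ray_parity_dual d d' : nn d d' ->
  ray_parity L d (+) ray_parity L d' = edge_parity L (dual_edge d d').
Proof.
case/nn_cases => [->|[->|[->|->]]]; case: d => i j /=.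
- by rewrite (dual_edge_right (i, j)) ray_parity_right.
- rewrite (dual_edge_left (i, j)) addbC.
  by have := ray_parity_right (i - 1) j; rewrite subrK.
- by rewrite (dual_edge_up (i, j)) ray_parity_up.
- rewrite (dual_edge_down (i, j)) addbC.
  by have := ray_parity_up L i (j - 1); rewrite subrK.
Qed.

Lemma ray_parity_dual_avoids r d d' : avoids L r -> nn d d' ->
  eA (dual_edge d d') = r \/ eB (dual_edge d d') = r -> ray_parity L d = ray_parity L d'.
Proof.
move=> hav hdd her; have := ray_parity_dual hdd.
rewrite (edge_parity_avoids hLnn hav her).
by case: (ray_parity L d); case: (ray_parity L d').
Qed.

Lemma ray_parity_corner r d : avoids L r -> corner r d -> ray_parity L d = ray_parity L r.
Proof.
case: r => p q hav.
have e1 : ray_parity L (p - 1, q) = ray_parity L (p, q).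
  apply: (ray_parity_dual_avoids hav); first by rewrite /nn /=; lia.
  have -> : (p, q) = ((p - 1, q).1 + 1, (p - 1, q).2) by rewrite /= subrK.
  by rewrite dual_edge_right /eA /= subrK; left.
have e2 : ray_parity L (p, q - 1) = ray_parity L (p, q).
  apply: (ray_parity_dual_avoids hav); first by rewrite /nn /=; lia.
  have -> : (p, q) = ((p, q - 1).1, (p, q - 1).2 + 1) by rewrite /= subrK.
  by rewrite dual_edge_up /eA /= subrK; left.
have e3 : ray_parity L (p - 1, q - 1) = ray_parity L (p, q - 1).
  apply: (ray_parity_dual_avoids hav); first by rewrite /nn /=; lia.
  have -> : (p, q - 1) = ((p - 1, q - 1).1 + 1, (p - 1, q - 1).2) by rewrite /= subrK.
  by rewrite dual_edge_right /eB /= !subrK; right.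
case: d => a b; rewrite /corner /= => /andP [/orP [] /eqP -> /orP [] /eqP ->] //.
by rewrite e3 e2.
Qed.

Lemma ray_parity_nn r r' : avoids L r -> avoids L r' -> nn r r' ->
  ray_parity L r = ray_parity L r'.
Proof.
move=> h h' hrr; move: h'; case/nn_cases: hrr => [->|[->|[->|->]]] h';
  case: r h h' => p q h h' /=.
- by rewrite (ray_parity_corner h') //= /corner /=; case_lia.
- by rewrite [RHS](ray_parity_corner h) //= /corner /=; case_lia.
- by rewrite (ray_parity_corner h') //= /corner /=; case_lia.
- by rewrite [RHS](ray_parity_corner h) //= /corner /=; case_lia.
Qed.

Lemma ray_parity_walk (P : pt -> Prop) x t :
  chain (fun a b => nn a b /\ P b) x t -> (forall r, r \in x :: t -> avoids L r) ->
  ray_parity L (last x t) = ray_parity L x.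
Proof.
elim: t x => //= y t IH x [[hxy _] hc] hav.
rewrite IH //; last by move=> r hr; apply: hav; rewrite in_cons hr orbT.
by apply/esym/ray_parity_nn => //; apply: hav; rewrite !in_cons eqxx ?orbT.
Qed.

End RayParity.

Lemma count_edge_of_eq0 (P : pt -> Prop) (L : seq (pt * pt)) e : nn_steps L ->
  (forall st, st \in L -> P st.1 /\ P st.2) -> ~ (P (eA e) /\ P (eB e)) ->
  count (fun st => edge_of st.1 st.2 == e) L = 0%N.
Proof.
move=> hnn hP hne; rewrite (@eq_in_count _ _ pred0) ?count_pred0 //.
move=> st hst /=; apply/negP => /eqP he; apply: hne.
have [h1 h2] := hP st hst.
by have := edge_of_ends (hnn st hst); rewrite he => -[[-> ->]|[-> ->]].
Qed.

Lemma corner_dual_edge d d' : nn d d' ->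
  corner (eA (dual_edge d d')) d /\ corner (eB (dual_edge d d')) d.
Proof.
case/nn_cases => [->|[->|[->|->]]]; case: d => i j /=.
- by rewrite (dual_edge_right (i, j)) /eA /eB /corner /=; split; case_lia.
- by rewrite (dual_edge_left (i, j)) /eA /eB /corner /=; split; case_lia.
- by rewrite (dual_edge_up (i, j)) /eA /eB /corner /=; split; case_lia.
- by rewrite (dual_edge_down (i, j)) /eA /eB /corner /=; split; case_lia.
Qed.

(* The two dual vertices of the dual edge bisecting [e]. *)
Definition dual_lo (e : Edge) : pt :=
  if e.2 then (e.1.1 - 1, e.1.2) else (e.1.1, e.1.2 - 1).
Definition dual_hi (e : Edge) : pt := e.1.

Lemma dual_edge_ends d d' : nn d d' ->
  (d = dual_lo (dual_edge d d') /\ d' = dual_hi (dual_edge d d')) \/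
  (d = dual_hi (dual_edge d d') /\ d' = dual_lo (dual_edge d d')).
Proof.
case/nn_cases => [->|[->|[->|->]]]; case: d => i j /=.
- by rewrite (dual_edge_right (i, j)) /dual_lo /dual_hi /= addrK; left.
- by rewrite (dual_edge_left (i, j)) /dual_lo /dual_hi /=; right.
- by rewrite (dual_edge_up (i, j)) /dual_lo /dual_hi /= addrK; left.
- by rewrite (dual_edge_down (i, j)) /dual_lo /dual_hi /=; right.
Qed.

Lemma dual_path_edge_inj (u : int -> pt) : injective u ->
  (forall i, nn (u i) (u (i + 1))) ->
  injective (fun k => dual_edge (u k) (u (k + 1))).
Proof.
move=> hinj hadj k c /= E.
have := dual_edge_ends (hadj k); have := dual_edge_ends (hadj c); rewrite E.
move: (dual_edge (u c) (u (c + 1))) => e.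
case=> -[h1 h2] [][h3 h4]; try by apply: hinj; rewrite h1 h3.
- have : k = c + 1 by apply: hinj; rewrite h3 h2.
  have : k + 1 = c by apply: hinj; rewrite h4 h1.
  lia.
- have : k = c + 1 by apply: hinj; rewrite h3 h2.
  have : k + 1 = c by apply: hinj; rewrite h4 h1.
  lia.
Qed.

Lemma int_step_const (g : int -> bool) (lo hi : int) : lo <= hi ->
  (forall k, lo <= k -> k < hi -> g (k + 1) = g k) -> g hi = g lo.
Proof.
move=> hlh; have [n ->] : exists n : nat, hi = lo + n%:Z by exists `|hi - lo|%N; lia.
elim: n => [|n IH] h; first by rewrite addr0.
have -> : lo + n.+1%:Z = lo + n%:Z + 1 by lia.
by rewrite h ?IH //; [move=> k hk hk'; apply: h; lia | lia | lia].
Qed.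

Lemma parity_flip_between (g : int -> bool) (a b c d : int) :
  (forall k, g (k + 1) = g k (+) ((k == a) (+) (k == c))) ->
  a < b -> b < c -> c < d -> g d = ~~ g b.
Proof.
move=> hg hab hbc hcd.
have const_between lo hi : lo <= hi -> (forall k, lo <= k -> k < hi -> k != a /\ k != c) ->
    g hi = g lo.
  move=> hlh hk; apply: int_step_const => // k h1 h2.
  by rewrite hg; have [/negPf -> /negPf ->] := hk k h1 h2; rewrite !addbF.
have gc : g c = g b by apply: const_between => [|k h1 h2]; lia.
have gc1 : g (c + 1) = ~~ g b.
  rewrite hg gc eqxx; have -> : (c == a) = false by lia.
  by rewrite /= addbT.
by rewrite -gc1; apply: const_between => [|k h1 h2]; lia.
Qed.

(** * Interlaced paths in V must meet *)

Lemma Vpath_mem (V : set pt) x s : Vpath V x s -> forall p, p \in x :: s -> V p.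
Proof.
case=> hx hc p; rewrite in_cons => /orP [/eqP -> //|]; exact: chain_nn_mem hc p.
Qed.

Section Crossing.
Variables (V : set pt) (u v : int -> pt).
Hypotheses (hu_inj : injective u) (hu_adj : forall i, nn (u i) (u (i + 1))).
Hypothesis hnoE : forall i, ~ inEdges V (dual_edge (u i) (u (i + 1))).
Hypothesis hv : forall i, V (v i) /\
  (v i = eA (dual_edge (u i) (u (i + 1))) \/ v i = eB (dual_edge (u i) (u (i + 1)))).
Hypothesis hVcconn : lconnected (~` V).

Let gamma i := dual_edge (u i) (u (i + 1)).
Let outer i := if v i == eA (gamma i) then eB (gamma i) else eA (gamma i).

Lemma outer_spec i : [/\ nn (v i) (outer i), edge_of (v i) (outer i) = gamma i,
   edge_of (outer i) (v i) = gamma i & ~ V (outer i)].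
Proof.
have [hVi hvi] := hv i; rewrite /outer; case: eqP => [e|ne].
- rewrite e; split; [exact: nn_ends | exact: edge_of_eAB | exact: edge_of_eBA |].
  by move=> hB; apply: (hnoE (i := i)); split; rewrite -/(gamma i) -?e.
- have e : v i = eB (gamma i) by case: hvi.
  rewrite e; split; [exact/nn_sym/nn_ends | exact: edge_of_eBA | exact: edge_of_eAB |].
  by move=> hA; apply: (hnoE (i := i)); split; rewrite -/(gamma i) -?e.
Qed.

Section Loop.
Variables (a c : int) (y : pt) (s1 s2 q : seq pt).
Hypotheses (hs1 : Vpath V y s1) (ls1 : last y s1 = v a).
Hypotheses (hs2 : Vpath V y s2) (ls2 : last y s2 = v c).
Hypotheses (hq : chain (fun a b => nn a b /\ (~` V) b) (outer c) q)
           (lq : last (outer c) q = outer a).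

(* Out along s2, across e_c, back through the complement of V, across e_a,
   and along s1 (in its own orientation, which is irrelevant mod 2). *)
Let loop := steps y s2 ++ (v c, outer c) :: steps (outer c) q ++
  (outer a, v a) :: steps y s1.

Lemma mem_loop st : st \in loop ->
  st \in steps y s2 \/ st = (v c, outer c) \/ st \in steps (outer c) q \/
  st = (outer a, v a) \/ st \in steps y s1.
Proof.
rewrite !(mem_cat, in_cons).
by move=> /orP [h|/orP [/eqP h|/orP [h|/orP [/eqP h| h]]]]; tauto.
Qed.

Lemma loop_nn : nn_steps loop.
Proof.
have [nnc _ _ _] := outer_spec c; have [nna _ _ _] := outer_spec a.
move=> st /mem_loop [h|[->|[h|[->|h]]]] //=.
- exact: chain_nn_steps hs2.2 _ h.
- exact: chain_nn_steps hq _ h.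
- exact: nn_sym.
- exact: chain_nn_steps hs1.2 _ h.
Qed.

Lemma loop_boundary_free : boundary_free loop.
Proof.
move=> f; rewrite /loop count_cat /= count_cat /= !oddD !oddb !odd_count_steps ls1 ls2 lq.
by case: (f y); case: (f (v c)); case: (f (outer c)); case: (f (outer a)); case: (f (v a)).
Qed.

Lemma outside_mem p : p \in outer c :: q -> ~ V p.
Proof.
rewrite in_cons => /orP [/eqP ->|]; first by case: (outer_spec c).
exact: chain_nn_mem hq p.
Qed.

Lemma loop_edge_parity k : edge_parity loop (gamma k) = (k == a) (+) (k == c).
Proof.
have inV (x : pt) s : Vpath V x s ->
    count (fun st => edge_of st.1 st.2 == gamma k) (steps x s) = 0%N.
  move=> hs; apply: (count_edge_of_eq0 (P := V)) (@hnoE k).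
  - exact: chain_nn_steps hs.2.
  - by move=> st /mem_steps [h1 h2]; split; apply: (Vpath_mem hs).
have outV : count (fun st => edge_of st.1 st.2 == gamma k) (steps (outer c) q) = 0%N.
  apply: (count_edge_of_eq0 (P := ~` V)).
  - exact: chain_nn_steps hq.
  - by move=> st /mem_steps [h1 h2]; split; apply: outside_mem.
  - move=> [h1 h2]; have [hVk [e|e]] := hv k; [apply: h1|apply: h2]; by rewrite /gamma -e.
have [_ eoc _ _] := outer_spec c; have [_ _ eoa _] := outer_spec a.
rewrite /edge_parity /loop count_cat /= count_cat /= (inV _ _ hs1) (inV _ _ hs2) outV.
have gammaE z : (gamma z == gamma k) = (k == z).
  by apply/eqP/eqP => [/(dual_path_edge_inj hu_inj hu_adj)|->].
by rewrite eoc eoa !gammaE /= !addn0 add0n oddD !oddb addbC.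
Qed.

Lemma loop_vertex st z : st \in loop -> z = st.1 \/ z = st.2 ->
  [\/ z \in y :: s1, z \in y :: s2 | ~ V z].
Proof.
have [_ _ _ nVc] := outer_spec c; have [_ _ _ nVa] := outer_spec a.
case/mem_loop => [h|[->|[h|[->|h]]]] hz.
- by have [? ?] := mem_steps h; constructor 2; case: hz => ->.
- by case: hz => -> /=; [constructor 2; rewrite -ls2 mem_last|constructor 3].
- by have [? ?] := mem_steps h; constructor 3; apply: outside_mem; case: hz => ->.
- by case: hz => -> /=; [constructor 3|constructor 1; rewrite -ls1 mem_last].
- by have [? ?] := mem_steps h; constructor 1; case: hz => ->.
Qed.

End Loop.

(* The loop built from the y-paths changes its ray parity exactly across e_a
   and e_c along Gamma, so it separates u_b from u_d; x-paths avoiding it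
   would give u_b and u_d the same parity. *)
Lemma interlaced_paths_meet a b c d y s1 s2 x t1 t2 : a < b -> b < c -> c < d ->
  Vpath V y s1 -> last y s1 = v a -> Vpath V y s2 -> last y s2 = v c ->
  Vpath V x t1 -> last x t1 = v b -> Vpath V x t2 -> last x t2 = v d ->
  exists p, (p \in y :: s1 \/ p \in y :: s2) /\ (p \in x :: t1 \/ p \in x :: t2).
Proof.
move=> hab hbc hcd hs1 ls1 hs2 ls2 ht1 lt1 ht2 lt2.
apply: contrapT => hno.
have [[_ _ _ nVc] [_ _ _ nVa]] := (outer_spec c, outer_spec a).
have [q [hq lq]] := hVcconn nVc nVa.
pose L := steps y s2 ++ (v c, outer c) :: steps (outer c) q ++
  (outer a, v a) :: steps y s1.
have hLnn : nn_steps L := loop_nn hs1 hs2 hq.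
have hLbf : boundary_free L := loop_boundary_free ls1 ls2 lq.
have hav r : V r -> r \in x :: t1 \/ r \in x :: t2 -> avoids L r.
  move=> hVr hr st hst.
  have neq z : z = st.1 \/ z = st.2 -> z != r.
    move=> hz; apply/eqP => hzr; subst z.
    case: (loop_vertex ls1 ls2 hq hst hz) => [h|h|]; last by move/(_ hVr).
    - by apply: hno; exists r; split; [left|].
    - by apply: hno; exists r; split; [right|].
  by split; apply: neq; [left|right].
have at_v k t : Vpath V x t -> last x t = v k ->
    (forall r, r \in x :: t -> r \in x :: t1 \/ r \in x :: t2) ->
    ray_parity L (u k) = ray_parity L x.
  move=> ht lt hsub.
  have hav_t r : r \in x :: t -> avoids L r.
    by move=> hr; exact: hav (Vpath_mem ht hr) (hsub r hr).
  rewrite -(ray_parity_walk hLnn hLbf ht.2 hav_t) lt.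
  apply: (ray_parity_corner hLnn hLbf); first by rewrite -lt; apply/hav_t/mem_last.
  by have [_ [->|->]] := hv k; have [] := corner_dual_edge (hu_adj k).
have step k : ray_parity L (u (k + 1)) = ray_parity L (u k) (+) ((k == a) (+) (k == c)).
  rewrite -(loop_edge_parity a hs1 hs2 hq) -(ray_parity_dual hLnn hLbf (hu_adj k)).
  by case: (ray_parity L (u k)); case: (ray_parity L (u (k + 1))).
have := parity_flip_between step hab hbc hcd.
rewrite (at_v d t2 ht2 lt2 (fun r h => or_intror h)).
rewrite (at_v b t1 ht1 lt1 (fun r h => or_introl h)).
by case: (ray_parity L x).
Qed.
End Crossing.

(** * First-passage distances and geodesics *)

Lemma chain_cat (r : pt -> pt -> Prop) x s1 s2 :
  chain r x (s1 ++ s2) <-> chain r x s1 /\ chain r (last x s1) s2.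
Proof. by elim: s1 x => /= [|y s1 IH] x; [tauto | rewrite IH; tauto]. Qed.

Lemma mem_split_last (p x : pt) s : p \in x :: s ->
  exists s1 s2, s = s1 ++ s2 /\ last x s1 = p.
Proof.
elim: s x => [|y s IH] x; rewrite in_cons.
- by move=> /orP [/eqP ->|//]; exists [::], [::].
- move=> /orP [/eqP ->|]; first by exists [::], (y :: s).
  by move=> /IH [s1 [s2 [-> l]]]; exists (y :: s1), s2.
Qed.

Lemma hasedge_split z s a b : hasedge z s a b -> exists s1 s2 c d,
  s = s1 ++ d :: s2 /\ last z s1 = c /\ ((c = a /\ d = b) \/ (c = b /\ d = a)).
Proof.
elim: s z => //= y s IH z [h|/IH [s1 [s2 [c [d [-> h]]]]]].
- by exists [::], s, z, y.
- by exists (y :: s1), s2, c, d.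
Qed.

Lemma eventually_or_eventually_not (Z : int -> Prop) :
  (forall n1 m1 n2 m2 : int, n1 < m1 -> m1 < n2 -> n2 < m2 -> Z n1 -> Z n2 -> Z m1 \/ Z m2) ->
  (exists N : int, forall n : int, N <= n -> Z n) \/
  (exists N : int, forall n : int, N <= n -> ~ Z n).
Proof.
move=> H; apply: contrapT => /not_orP [hnot hnot'].
have notZ N : exists2 n, N <= n & ~ Z n.
  apply: contrapT => hA; apply: hnot; exists N => n hn; apply: contrapT => hz.
  by apply: hA; exists n.
have isZ N : exists2 n, N <= n & Z n.
  apply: contrapT => hB; apply: hnot'; exists N => n hn hz.
  by apply: hB; exists n.
have [n1 _ z1] := isZ 0.
have [m1 hm1 z2] := notZ (n1 + 1).
have [n2 hn2 z3] := isZ (m1 + 1).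
have [m2 hm2 z4] := notZ (n2 + 1).
by case: (H n1 m1 n2 m2) => //; lia.
Qed.

Section FirstPassage.
Variables (V : set pt) (R : realType) (w : EType V -> R).
Hypothesis hw0 : forall e, 0 <= w e.
Hypothesis hgeo : forall x y, V x -> V y -> exists s, geodesic w x s y.

Lemma wt_ge0 e : 0 <= wt w e.
Proof. by rewrite /wt; case: pselect. Qed.

Lemma tauP_ge0 x s : 0 <= tauP w x s.
Proof. by elim: s x => //= y s IH x; rewrite addr_ge0 ?wt_ge0. Qed.

Lemma tauP_cat x s1 s2 : tauP w x (s1 ++ s2) = tauP w x s1 + tauP w (last x s1) s2.
Proof. by elim: s1 x => /= [|y s1 IH] x; rewrite ?add0r // IH addrA. Qed.

Lemma fdist_le_tauP x s : Vpath V x s -> fdist w x (last x s) <= tauP w x s.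
Proof.
move=> hp; apply: ge_inf; last by exists s.
by exists 0 => r [s0 _ <-]; exact: tauP_ge0.
Qed.

Lemma fdist_triangle x y z : V x -> V y -> V z ->
  fdist w x z <= fdist w x y + fdist w y z.
Proof.
move=> hx hy hz.
have [s1 [[_ c1] [l1 t1]]] := hgeo hx hy.
have [s2 [[_ c2] [l2 t2]]] := hgeo hy hz.
have hp : Vpath V x (s1 ++ s2) by split=> //; apply/chain_cat; rewrite l1.
by have := fdist_le_tauP hp; rewrite last_cat l1 l2 tauP_cat l1 t1 t2.
Qed.

Lemma fdist_le_edge a b z : nn a b -> V a -> V b -> V z ->
  fdist w a z <= wt w (edge_of a b) + fdist w b z.
Proof.
move=> hab ha hb hz.
have [s [[_ hc] [l t]]] := hgeo hb hz.
by have := @fdist_le_tauP a (b :: s) (conj ha (conj (conj hab hb) hc)); rewrite /= l t.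
Qed.

Lemma geodesic_fdist_split x s y p : geodesic w x s y -> p \in x :: s ->
  fdist w x y = fdist w x p + fdist w p y.
Proof.
move=> [hp [l t]] hps.
have hV := Vpath_mem hp hps.
have [s1 [s2 [e lp]]] := mem_split_last hps; subst s p.
have [hx /chain_cat [c1 c2]] := hp.
have hy : V y by rewrite -l; apply: (Vpath_mem hp); exact: mem_last.
have h1 := @fdist_le_tauP x s1 (conj hx c1).
have h2 := @fdist_le_tauP (last x s1) s2 (conj hV c2).
rewrite last_cat in l; rewrite tauP_cat in t; rewrite l in h2.
have := fdist_triangle hx hV hy.
lra.
Qed.

Definition toward (x y t : pt) := fdist w x t = wt w (edge_of x y) + fdist w y t.

Lemma geodesic_toward z s1 b s2 t : geodesic w z (s1 ++ b :: s2) t ->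
  toward (last z s1) b t.
Proof.
move=> hg; have [[hz /chain_cat [c1 /= [[hab hb] c2]]] [l t0]] := hg.
have hmem : last z s1 \in z :: s1 ++ b :: s2 by rewrite -cat_cons mem_cat mem_last.
have e1 := geodesic_fdist_split hg hmem.
have hVa : V (last z s1) by apply: (Vpath_mem (conj hz c1)); exact: mem_last.
rewrite last_cat /= in l.
have hVt : V t by rewrite -l; apply: (Vpath_mem (conj hb c2)); exact: mem_last.
rewrite tauP_cat /= in t0.
have h1 := @fdist_le_tauP z s1 (conj hz c1).
have h2 := @fdist_le_tauP b s2 (conj hb c2); rewrite l in h2.
have := fdist_le_edge hab hVa hb hVt.
rewrite /toward; lra.
Qed.

Lemma eta_n_toward (v : int -> pt) n x y : V (v n) -> eta_n w v n x y -> toward x y (v n).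
Proof.
move=> hvn [[hxy [hx hy]] [[z [s [hg /hasedge_split [s1 [s2 [c [d [e [l hcd]]]]]]]]] hle]].
rewrite e in hg; have := geodesic_toward hg; rewrite l.
case: hcd => -[-> ->] //; rewrite /toward (edge_ofC hxy) => h.
have := wt_ge0 (edge_of x y); have := fdist_le_edge hxy hx hy hvn.
lra.
Qed.

Lemma toward_eta_n (v : int -> pt) n x y : V (v n) -> dirE V x y ->
  toward x y (v n) -> eta_n w v n x y.
Proof.
move=> hvn hd hto; have [hxy [hx hy]] := hd.
have [s [[_ hc] [l t]]] := hgeo hy hvn.
split=> //; split.
- exists x, (y :: s); split; last by left; left.
  by split; [split=> //=; split | rewrite /= l t -hto].
- by have := wt_ge0 (edge_of x y); rewrite /toward in hto; lra.
Qed.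

Section LimitGraph.
Variable u v : int -> pt.
Hypotheses (hu_inj : injective u) (hu_adj : forall i, nn (u i) (u (i + 1))).
Hypothesis hnoE : forall i, ~ inEdges V (dual_edge (u i) (u (i + 1))).
Hypothesis hv : forall i, V (v i) /\
  (v i = eA (dual_edge (u i) (u (i + 1))) \/ v i = eB (dual_edge (u i) (u (i + 1)))).
Hypothesis hVcconn : lconnected (~` V).

Lemma toward_transfer x y N M b a p : dirE V x y ->
  geodesic w y b (v N) -> geodesic w x a (v M) -> p \in y :: b -> p \in x :: a ->
  toward x y (v N) -> toward x y (v M).
Proof.
move=> [hxy [hx hy]] gb ga pb pa; rewrite /toward => hN.
have hp : V p by apply: (Vpath_mem gb.1).
have e1 := geodesic_fdist_split gb pb.
have e2 := geodesic_fdist_split ga pa.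
have t1 := fdist_triangle hx hp (proj1 (hv N)).
have t2 := fdist_triangle hy hp (proj1 (hv M)).
have t3 := fdist_le_edge hxy hx hy (proj1 (hv M)).
lra.
Qed.

Lemma toward_interlaced x y : dirE V x y -> forall n1 m1 n2 m2 : int,
  n1 < m1 -> m1 < n2 -> n2 < m2 -> toward x y (v n1) -> toward x y (v n2) ->
  toward x y (v m1) \/ toward x y (v m2).
Proof.
move=> hd n1 m1 n2 m2 h1 h2 h3 z1 z2; have [_ [hx hy]] := hd.
have [b1 gb1] := hgeo hy (proj1 (hv n1)).
have [b2 gb2] := hgeo hy (proj1 (hv n2)).
have [a1 ga1] := hgeo hx (proj1 (hv m1)).
have [a2 ga2] := hgeo hx (proj1 (hv m2)).
have [p [pb pa]] := interlaced_paths_meet hu_inj hu_adj hnoE hv hVcconn h1 h2 h3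
  gb1.1 gb1.2.1 gb2.1 gb2.2.1 ga1.1 ga1.2.1 ga2.1 ga2.2.1.
case: pa => pa; [left|right]; case: pb => pb.
- exact: toward_transfer hd gb1 ga1 pb pa z1.
- exact: toward_transfer hd gb2 ga1 pb pa z2.
- exact: toward_transfer hd gb1 ga2 pb pa z1.
- exact: toward_transfer hd gb2 ga2 pb pa z2.
Qed.

Lemma eta_n_eventually x y : dirE V x y ->
  (exists N : int, forall n : int, N <= n -> eta_n w v n x y) \/
  (exists N : int, forall n : int, N <= n -> ~ eta_n w v n x y).
Proof.
move=> hd.
have etaE n : eta_n w v n x y <-> toward x y (v n).
  by split; [exact: eta_n_toward (proj1 (hv n)) | exact: toward_eta_n (proj1 (hv n)) hd].
case: (eventually_or_eventually_not (toward_interlaced hd)) => -[N hN]; [left|right];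
  by exists N => n /hN; rewrite etaE.
Qed.

Lemma Glim_chain_tauP x s : V x -> chain (Glim w v) x s ->
  Vpath V x s /\ exists N : int, forall n, N <= n ->
    tauP w x s = fdist w x (v n) - fdist w (last x s) (v n).
Proof.
elim: s x => [|y s IH] x hx /=.
  by move=> _; split; [split | exists 0 => n _; rewrite subrr].
move=> [[N1 hN1] hc].
have [[hxy [_ hy]] _] := hN1 N1 (lexx _).
have [[_ hc'] [N2 hN2]] := IH y hy hc.
split; first by split=> //=; split.
exists (Num.max N1 N2) => n; rewrite ge_max => /andP [h1 h2].
have := eta_n_toward (proj1 (hv n)) (hN1 n h1).
by rewrite /toward (hN2 n h2) => ->; lra.
Qed.

Lemma Glim_chain_geodesic x s : V x -> chain (Glim w v) x s ->
  geodesic w x s (last x s).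
Proof.
move=> hx hc; have [hp [N hN]] := Glim_chain_tauP hx hc.
split=> //; split=> //.
have hL : V (last x s) by apply: (Vpath_mem hp); exact: mem_last.
have := fdist_le_tauP hp; have := fdist_triangle hx hL (proj1 (hv N)).
have := hN N (lexx _).
lra.
Qed.

End LimitGraph.
End FirstPassage.

Lemma ae_forall_countable d (T : sigmaRingType d) (R : realType)
    (mu : {measure set T -> \bar R}) (I : countType) (Q : I -> T -> Prop) :
  (forall i, {ae mu, forall t, Q i t}) -> {ae mu, forall t, forall i, Q i t}.
Proof.
move=> hQ.
have : {ae mu, forall t, forall n, if unpickle n is Some i then Q i t else True}.
  by apply: ae_foralln => n; case: (unpickle n) => [i|]; [exact: hQ | exact: aeW].
by apply: filterS => t h i; have := h (pickle i); rewrite pickleK.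
Qed.

(* Only the connectedness of the complement of V and the position of Gamma
   enter the proof. *)
Theorem theorem1p2 (R : realType) (V : set pt) (u : int -> pt) (v : int -> pt)
  (hVinf : ~ finite_set V) (hVcinf : ~ finite_set (~` V))
  (hVconn : lconnected V) (hVcconn : lconnected (~` V))
  (hu_inj : injective u) (hu_adj : forall i : int, nn (u i) (u (i + 1)))
  (hcompV : exists x0, V x0 /\
     V = lcomponent (fun a b => nn a b /\
            forall i : int, edge_of a b <> dual_edge (u i) (u (i + 1))) x0)
  (hcompVc : exists x1, ~ V x1 /\
     ~` V = lcomponent (fun a b => nn a b /\
            forall i : int, edge_of a b <> dual_edge (u i) (u (i + 1))) x1)
  (hnoE : forall i : int, ~ inEdges V (dual_edge (u i) (u (i + 1))))
  (hv : forall i : int, V (v i) /\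
     (v i = eA (dual_edge (u i) (u (i + 1))) \/
      v i = eB (dual_edge (u i) (u (i + 1)))))
  (P : probability (Omega V R) R)
  (hP0 : {ae P, forall w : Omega V R, forall e, 0 <= w e})
  (hgeo : forall x y, V x -> V y ->
     {ae P, forall w : Omega V R, exists s, geodesic w x s y}) :
  {ae P, forall w : Omega V R,
     (forall x y, dirE V x y ->
        (exists N : int, forall n : int, N <= n -> eta_n w v n x y) \/
        (exists N : int, forall n : int, N <= n -> ~ eta_n w v n x y)) /\
     (forall x s, V x -> chain (Glim w v) x s -> geodesic w x s (last x s))}.
Proof.
have hgeo_all : {ae P, forall w : Omega V R, forall xy : pt * pt,
    V xy.1 -> V xy.2 -> exists s, geodesic w xy.1 s xy.2}.
  apply: ae_forall_countable => -[x y] /=.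
  have [hx|hx] := pselect (V x); last by apply: aeW => w /hx.
  have [hy|hy] := pselect (V y); last by apply: aeW => w _ /hy.
  by apply: filterS (hgeo x y hx hy) => w h _ _.
apply: filterS2 hP0 hgeo_all => w hw0 hgeo_w.
have hgeo' x y : V x -> V y -> exists s, geodesic w x s y := hgeo_w (x, y).
split=> [x y|x s hx].
- exact: (eta_n_eventually hw0 hgeo' hu_inj hu_adj hnoE hv hVcconn).
- exact: (Glim_chain_geodesic hw0 hgeo' hv hx).
Qed.
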